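(* Let $u:X\to\mathbb{R}$ be non-constant affine and let $\succ_1,\succ_2$ be hope-and-prepare preferences on $\mathcal{F}$ with unique representations $(u,C_1,D_1)$ and $(u,C_2,D_2)$ respectively. Then: (i) $\succ_1$ is more ambiguity averse than $\succ_2$ if and only if $C_2\subseteq C_1$; (ii) $\succ_1$ is more ambiguity loving than $\succ_2$ if and only if $D_2\subseteq D_1$.
   Context: $S$ is a set of states with algebra $\Sigma$; $X$ is a non-singleton convex subset of a real vector space; $\mathcal{F}$ is the set of simple acts $f:S\to X$; elements of $X$ are identified with constant acts; $\Delta$ is the set of finitely additive probability measures on $(S,\Sigma)$ with weak* topology. A hope-and-prepare preference with representation $(u,C,D)$ ($C,D\subseteq\Delta$ convex compact, $C\cap D\neq\emptyset$) is the relation: $f\succ g$ iff $\min_{p\in C}\int u(f)dp>\min_{p\in C}\int u(g)dp$ and $\max_{p\in D}\int u(f)dp>\max_{p\in D}\int u(g)dp$; unique representation means $C,D$ unique and $u$ unique up to positive affine transformation. $\succ_1$ is more ambiguity averse than $\succ_2$ if for all $f\in\mathcal{F}$, $x\in X$, $f\succ_1 x$ implies $f\succ_2 x$; $\succ_1$ is more ambiguity loving than $\succ_2$ if for all $f\in\mathcal{F}$, $x\in X$, $x\succ_1 f$ implies $x\succ_2 f$. *)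

From HB Require Import structures.
From mathcomp Require Import all_boot all_order all_algebra.
From mathcomp Require Import all_classical all_reals all_analysis.
Set Implicit Arguments. Unset Strict Implicit. Unset Printing Implicit Defensive.
Import Order.TTheory GRing.Theory Num.Theory numFieldNormedType.Exports.
Local Open Scope classical_set_scope.
Local Open Scope ring_scope.

Section HopePrepare.
Variables (R : realType) (V : lmodType R) (S : Type).

Definition is_algebra (Sigma : set (set S)) : Prop :=
  [/\ Sigma setT,
      (forall A, Sigma A -> Sigma (~` A)) &
      (forall A B, Sigma A -> Sigma B -> Sigma (A `|` B))].

Definition event (Sigma : set (set S)) := {A : set S | Sigma A}.

(* a set function on events, extended by 0 outside Sigma (only used to
   evaluate it on sets that are known to be events) *)
Definition pext (Sigma : set (set S)) (p : event Sigma -> R) (B : set S) : R :=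
  match pselect (Sigma B) with
  | left h => p (exist _ B h)
  | right _ => 0
  end.

Definition fa_prob (Sigma : set (set S)) (p : event Sigma -> R) : Prop :=
  [/\ pext p setT = 1,
      (forall A, Sigma A -> 0 <= pext p A) &
      (forall A B, Sigma A -> Sigma B -> A `&` B = set0 ->
         pext p (A `|` B) = pext p A + pext p B)].

Definition sint (Sigma : set (set S)) (p : event Sigma -> R) (g : S -> R) : R :=
  (\sum_(r \in range g) r * pext p (g @^-1` [set r]))%R.

Definition convex_set (X : set V) : Prop :=
  forall x y t, X x -> X y -> 0 <= t -> t <= 1 -> X (t *: x + (1 - t) *: y).

Definition is_act (Sigma : set (set S)) (X : set V) (f : S -> V) : Prop :=
  [/\ (forall s, X (f s)), finite_set (range f) &
      (forall x, Sigma (f @^-1` [set x]))].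

Definition cst_act (x : V) : S -> V := fun _ => x.

Definition affine_on (X : set V) (u : V -> R) : Prop :=
  forall x y t, X x -> X y -> 0 <= t -> t <= 1 ->
    u (t *: x + (1 - t) *: y) = t * u x + (1 - t) * u y.

(* sets of charges: convexity, and compactness for the weak* topology.
   On Delta the weak* topology sigma(ba(Sigma), B_0(Sigma)) is the topology of
   pointwise (setwise) convergence on events. *)
Definition convex_charges (Sigma : set (set S)) (C : set (event Sigma -> R)) : Prop :=
  forall p q t, C p -> C q -> 0 <= t -> t <= 1 ->
    C (fun A => t * p A + (1 - t) * q A).

Definition wstar_compact (Sigma : set (set S)) (C : set (event Sigma -> R)) : Prop :=
  @compact (prod_topology (fun _ : event Sigma => (R : topologicalType))) C.

(* min over C and max over D of the expected utility; C, D are compact and the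
   integrals continuous, so inf/sup are attained (min/max) *)
Definition minEU (Sigma : set (set S)) (C : set (event Sigma -> R))
  (u : V -> R) (f : S -> V) : R := inf [set sint p (u \o f) | p in C].
Definition maxEU (Sigma : set (set S)) (D : set (event Sigma -> R))
  (u : V -> R) (f : S -> V) : R := sup [set sint p (u \o f) | p in D].

Definition HP_rep (Sigma : set (set S)) (X : set V)
  (pref : (S -> V) -> (S -> V) -> Prop) (u : V -> R)
  (C D : set (event Sigma -> R)) : Prop :=
  [/\ affine_on X u,
      C `<=` fa_prob (Sigma:=Sigma) /\ D `<=` fa_prob (Sigma:=Sigma),
      (convex_charges C /\ convex_charges D) /\
      (wstar_compact C /\ wstar_compact D),
      C `&` D !=set0 &
      (forall f g, pref f g <->
        [/\ is_act Sigma X f, is_act Sigma X g,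
            minEU C u f > minEU C u g & maxEU D u f > maxEU D u g])].

Definition HP_unique_rep (Sigma : set (set S)) (X : set V)
  (pref : (S -> V) -> (S -> V) -> Prop) (u : V -> R)
  (C D : set (event Sigma -> R)) : Prop :=
  HP_rep X pref u C D /\
  (forall u' C' D', HP_rep X pref u' C' D' ->
     [/\ C' = C, D' = D &
         exists a b, 0 < a /\ forall x, X x -> u' x = a * u x + b]).

Definition more_ambiguity_averse (Sigma : set (set S)) (X : set V)
  (pref1 pref2 : (S -> V) -> (S -> V) -> Prop) : Prop :=
  forall f x, is_act Sigma X f -> X x -> pref1 f (cst_act x) -> pref2 f (cst_act x).

Definition more_ambiguity_loving (Sigma : set (set S)) (X : set V)
  (pref1 pref2 : (S -> V) -> (S -> V) -> Prop) : Prop :=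
  forall f x, is_act Sigma X f -> X x -> pref1 (cst_act x) f -> pref2 (cst_act x) f.

End HopePrepare.

From Pilot Require Import Defs.
From HB Require Import structures.
From mathcomp Require Import all_boot all_order all_algebra.
From mathcomp Require Import all_classical all_reals all_analysis.
From mathcomp Require Import ring lra.
Import Order.TTheory GRing.Theory Num.Theory numFieldNormedType.Exports.
Local Open Scope classical_set_scope.
Local Open Scope ring_scope.
Set Implicit Arguments. Unset Strict Implicit.

(* A constant act x is worse than f for a hope-and-prepare preference exactly
   when u x lies below the lower envelope min_(p in C) E_p[u o f]: the upper
   envelope never binds, because C and D share a prior.  Since u is affine on
   the convex set X, every utility level between two values of u o f is that of
   a constant act, so >-_1 is more ambiguity averse than >-_2 iff the lower
   envelope of C1 lies below that of C2 on every act.  This holds when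
   C2 is included in C1; conversely it makes the convex hull of C1 and C2 a set
   with the same lower envelope as C1, hence part of another representation of
   >-_1, and uniqueness forces it to be C1.  Part (ii) is part (i) for the
   converse preferences, which are represented by (-u, D, C). *)

Lemma finite_range_bounded (R : realType) (T : Type) (g : T -> R) :
  finite_set (range g) -> exists M : R, forall t, `|g t| <= M.
Proof.
move=> /finite_compact/compact_bounded [M [_ gM]].
by exists (M + 1) => t; apply: gM; [rewrite ltrDl | exists t].
Qed.

Lemma preimage_cons (T : Type) (U : eqType) (f : T -> U) x s :
  f @^-1` [set` x :: s] = f @^-1` [set x] `|` f @^-1` [set` s].
Proof.
apply/seteqP; split => t /=; rewrite inE; first by case/orP => [/eqP|]; [left | right].
by case=> [->|->]; rewrite ?eqxx ?orbT.
Qed.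

Section FiniteAdditivity.
Variables (R : realType) (S : Type) (Sigma : set (set S)).
Hypothesis Sigma_algebra : is_algebra Sigma.

Lemma algebra_set0 : Sigma set0.
Proof. by case: Sigma_algebra => ST SC _; rewrite -setCT; exact: SC. Qed.

Lemma algebra_setU A B : Sigma A -> Sigma B -> Sigma (A `|` B).
Proof. by case: Sigma_algebra => _ _; apply. Qed.

Lemma algebra_preimage_seq (T : eqType) (f : S -> T) (s : seq T) :
  (forall x, Sigma (f @^-1` [set x])) -> Sigma (f @^-1` [set` s]).
Proof.
move=> f_meas; elim: s => [|x s IH]; first by rewrite set_nil; exact: algebra_set0.
by rewrite preimage_cons; exact: algebra_setU.
Qed.

Definition is_simple (g : S -> R) :=
  (forall r, Sigma (g @^-1` [set r])) /\ finite_set (range g).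

Variable p : event Sigma -> R.
Hypothesis p_prob : fa_prob p.

Lemma pext_ge0 B : 0 <= pext p B.
Proof.
case: (pselect (Sigma B)) => [SB|nSB]; first by case: p_prob => _ + _; exact.
by rewrite /pext; case: pselect.
Qed.

Lemma pext_set0 : pext p set0 = 0.
Proof.
case: p_prob => _ _ /(_ _ _ algebra_set0 algebra_set0 (setIid _)).
by rewrite setUid => ?; lra.
Qed.

Lemma pext_preimage_seq (T : eqType) (f : S -> T) (s : seq T) :
  (forall x, Sigma (f @^-1` [set x])) -> uniq s ->
  \sum_(x <- s) pext p (f @^-1` [set x]) = pext p (f @^-1` [set` s]).
Proof.
move=> f_meas; elim: s => [|x s IH]; first by rewrite big_nil set_nil pext_set0.
case/andP => xs s_uniq; rewrite big_cons IH // preimage_cons.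
case: p_prob => _ _ -> //; first exact: algebra_preimage_seq.
by apply/seteqP; split => t // [/= ->]; rewrite (negbTE xs).
Qed.

Lemma sint_weights g : is_simple g ->
  exists s, [/\ range g = [set` s],
    sint p g = \sum_(r <- s) r * pext p (g @^-1` [set r]) &
    \sum_(r <- s) pext p (g @^-1` [set r]) = 1].
Proof.
move=> [g_meas /finite_seqP [s0 g_s0]].
have s_uniq := undup_uniq s0.
have range_s : range g = [set` undup s0].
  by rewrite g_s0; apply/seteqP; split => r /=; rewrite mem_undup.
exists (undup s0); split => //; first by rewrite /sint range_s -fsbig_seq.
by rewrite pext_preimage_seq // -range_s preimage_range; case: p_prob.
Qed.

Lemma sint_ge g c : is_simple g -> (forall t, c <= g t) -> c <= sint p g.
Proof.
move=> /sint_weights [s [range_s -> w1]] cg.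
rewrite -[c]mulr1 -w1 mulr_sumr big_seq [leRHS]big_seq; apply: ler_sum => r rs.
have : range g r by rewrite range_s.
by case=> t _ <-; rewrite ler_wpM2r ?pext_ge0.
Qed.

Lemma sint_le g c : is_simple g -> (forall t, g t <= c) -> sint p g <= c.
Proof.
move=> /sint_weights [s [range_s -> w1]] gc.
rewrite -[c]mulr1 -w1 mulr_sumr big_seq [leRHS]big_seq; apply: ler_sum => r rs.
have : range g r by rewrite range_s.
by case=> t _ <-; rewrite ler_wpM2r ?pext_ge0.
Qed.

Lemma exists_gt_of_lt_sint g c : is_simple g -> c < sint p g -> exists t, c < g t.
Proof.
move=> g_simple; apply: contraPP => /forallNP g_le; apply/negP; rewrite -leNgt.
by apply: sint_le => // t; rewrite leNgt; exact/negP/g_le.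
Qed.

Lemma exists_lt_of_sint_lt g c : is_simple g -> sint p g < c -> exists t, g t < c.
Proof.
move=> g_simple; apply: contraPP => /forallNP le_g; apply/negP; rewrite -leNgt.
by apply: sint_ge => // t; rewrite leNgt; exact/negP/le_g.
Qed.

Lemma sint_opp g : sint p (\- g) = - sint p g.
Proof.
rewrite /sint; have -> : range (\- g) = -%R @` range g by rewrite image_comp.
rewrite fsbig_image; last by move=> r r' _ _; exact: oppr_inj.
rewrite -mulN1r mulr_fsumr; apply: eq_fsbigr => r _.
have -> : (\- g) @^-1` [set - r] = g @^-1` [set r].
  by apply/seteqP; split => t /=; [move/oppr_inj | move->].
by rewrite mulN1r mulNr.
Qed.

End FiniteAdditivity.

Section ExpectedUtility.
Variables (R : realType) (V : lmodType R) (S : Type) (Sigma : set (set S)).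
Hypothesis Sigma_algebra : is_algebra Sigma.
Variables (X : set V) (u : V -> R).
Implicit Types (C D : set (event Sigma -> R)) (f : S -> V).
Local Notation Delta := (@fa_prob R S Sigma).

Lemma act_simple f : is_act Sigma X f -> is_simple Sigma (u \o f).
Proof.
move=> [_ f_fin f_meas]; split; last first.
  have -> : range (u \o f) = u @` range f by rewrite image_comp.
  exact: finite_image.
move=> r; have -> : (u \o f) @^-1` [set r] = f @^-1` (range f `&` u @^-1` [set r]).
  by apply/seteqP; split => t /=; [split => //; exists t | case].
have /finite_seqP [s ->] := finite_setIl (u @^-1` [set r]) f_fin.
exact: algebra_preimage_seq.
Qed.

Lemma cst_act_is_act x : X x -> is_act Sigma X (cst_act x).
Proof.
move=> Xx; split => //.
  by apply: (@sub_finite_set _ _ [set x]); [move=> y [t _ <-] | exact: finite_set1].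
move=> y; have [<-|nxy] := pselect (x = y).
  have -> : @cst_act _ _ S x @^-1` [set x] = setT by apply/seteqP.
  by case: Sigma_algebra.
have -> : @cst_act _ _ S x @^-1` [set y] = set0 by apply/seteqP; split => t.
exact: algebra_set0.
Qed.

Lemma sint_cst (p : event Sigma -> R) x : fa_prob p -> X x ->
  sint p (u \o @cst_act _ _ S x) = u x.
Proof.
move=> p_prob Xx; have x_simple := act_simple (cst_act_is_act Xx).
by apply/le_anti; rewrite sint_le ?sint_ge.
Qed.

Lemma EU_bounded C f : C `<=` Delta -> is_act Sigma X f ->
  has_lbound [set sint p (u \o f) | p in C] /\
  has_ubound [set sint p (u \o f) | p in C].
Proof.
move=> C_prob f_act; have uf_simple := act_simple f_act.
have [M ufM] := finite_range_bounded uf_simple.2.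
have [lbM leM] : (forall t, - M <= (u \o f) t) /\ (forall t, (u \o f) t <= M).
  by split => t; have := ufM t; rewrite ler_norml => /andP[].
split; [exists (- M) | exists M] => _ [p Cp <-].
  exact: (sint_ge Sigma_algebra (C_prob _ Cp) uf_simple lbM).
exact: (sint_le Sigma_algebra (C_prob _ Cp) uf_simple leM).
Qed.

Lemma minEU_le C f p : C `<=` Delta -> is_act Sigma X f -> C p ->
  minEU C u f <= sint p (u \o f).
Proof.
by move=> C_prob f_act Cp; apply: (ge_inf (EU_bounded C_prob f_act).1); exists p.
Qed.

Lemma le_maxEU C f p : C `<=` Delta -> is_act Sigma X f -> C p ->
  sint p (u \o f) <= maxEU C u f.
Proof.
by move=> C_prob f_act Cp; apply: (ub_le_sup (EU_bounded C_prob f_act).2); exists p.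
Qed.

Lemma minEU_ge C f c : C !=set0 ->
  (forall p, C p -> c <= sint p (u \o f)) -> c <= minEU C u f.
Proof.
move=> [p0 Cp0] cC; apply: lb_le_inf; first by exists (sint p0 (u \o f)), p0.
by move=> _ [p Cp <-]; exact: cC.
Qed.

Lemma maxEU_le C f c : C !=set0 ->
  (forall p, C p -> sint p (u \o f) <= c) -> maxEU C u f <= c.
Proof.
move=> [p0 Cp0] Cc; apply: ge_sup; first by exists (sint p0 (u \o f)), p0.
by move=> _ [p Cp <-]; exact: Cc.
Qed.

Lemma minEU_cst C x : C `<=` Delta -> C !=set0 -> X x ->
  minEU C u (cst_act x) = u x.
Proof.
move=> C_prob [p Cp] Xx; apply/le_anti/andP; split.
  by rewrite -(sint_cst (C_prob _ Cp) Xx) minEU_le //; exact: cst_act_is_act.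
by apply: minEU_ge; [exists p | move=> q Cq; rewrite sint_cst //; exact: C_prob].
Qed.

Lemma maxEU_cst C x : C `<=` Delta -> C !=set0 -> X x ->
  maxEU C u (cst_act x) = u x.
Proof.
move=> C_prob [p Cp] Xx; apply/le_anti/andP; split.
  by apply: maxEU_le; [exists p | move=> q Cq; rewrite sint_cst //; exact: C_prob].
by rewrite -(sint_cst (C_prob _ Cp) Xx) le_maxEU //; exact: cst_act_is_act.
Qed.

Lemma minEU_le_maxEU C D f : C `<=` Delta -> D `<=` Delta ->
  C `&` D !=set0 -> is_act Sigma X f -> minEU C u f <= maxEU D u f.
Proof.
move=> C_prob D_prob [p [Cp Dp]] f_act.
exact: le_trans (minEU_le C_prob f_act Cp) (le_maxEU D_prob f_act Dp).
Qed.

Lemma minEU_le_subset C1 C2 f : C1 `<=` Delta -> C2 `<=` C1 -> C2 !=set0 ->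
  is_act Sigma X f -> minEU C1 u f <= minEU C2 u f.
Proof.
move=> C1_prob C12 C2_nonempty f_act; apply: minEU_ge => // p C2p.
exact: minEU_le C1_prob f_act (C12 _ C2p).
Qed.

Lemma minEU_opp C f : minEU C (\- u) f = - maxEU C u f.
Proof.
rewrite /minEU /maxEU /inf; congr (- sup _); rewrite image_comp.
by apply: eq_imagel => p _ /=; rewrite (sint_opp _ (u \o f)) opprK.
Qed.

Lemma maxEU_opp C f : maxEU C (\- u) f = - minEU C u f.
Proof.
rewrite /minEU /maxEU /inf opprK; congr sup; rewrite image_comp.
by apply: eq_imagel => p _ /=; rewrite (sint_opp _ (u \o f)).
Qed.

End ExpectedUtility.

Section Representation.
Variables (R : realType) (V : lmodType R) (S : Type) (Sigma : set (set S)).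
Hypothesis Sigma_algebra : is_algebra Sigma.
Variable X : set V.
Implicit Types (pref : (S -> V) -> (S -> V) -> Prop) (u : V -> R)
  (C D : set (event Sigma -> R)).

Lemma HP_rep_pref_cst pref u C D f x : HP_rep X pref u C D ->
  is_act Sigma X f -> X x -> pref f (cst_act x) <-> u x < minEU C u f.
Proof.
case=> _ [C_prob D_prob] _ CD pref_rep f_act Xx.
have [C_nonempty D_nonempty] : C !=set0 /\ D !=set0.
  by case: CD => p [Cp Dp]; split; exists p.
rewrite pref_rep (minEU_cst Sigma_algebra u C_prob C_nonempty Xx).
rewrite (maxEU_cst Sigma_algebra u D_prob D_nonempty Xx); split => [[] //|ltx].
split => //; first exact: cst_act_is_act.
exact: lt_le_trans ltx (minEU_le_maxEU Sigma_algebra u C_prob D_prob CD f_act).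
Qed.

Lemma HP_rep_converse pref u C D : HP_rep X pref u C D ->
  HP_rep X (fun f g => pref g f) (\- u) D C.
Proof.
case=> u_affine [C_prob D_prob] [[C_convex D_convex] [C_compact D_compact]] CD pref_rep.
split => //; first by move=> x y t Xx Xy t0 t1 /=; rewrite u_affine //; ring.
  by rewrite setIC.
move=> f g; rewrite pref_rep !minEU_opp !maxEU_opp !ltrN2.
by split => -[].
Qed.

Lemma HP_unique_rep_converse pref u C D : HP_unique_rep X pref u C D ->
  HP_unique_rep X (fun f g => pref g f) (\- u) D C.
Proof.
case=> rep rep_unique; split => [|u' C' D' /HP_rep_converse rep'].
  exact: HP_rep_converse.
have [-> -> [a [b [a_gt0 u'E]]]] := rep_unique _ _ _ rep'.
split => //; exists a, (- b); split => // x Xx.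
by rewrite -[u' x]opprK -[- u' x]/((\- u') x) u'E //= mulrN opprD.
Qed.

End Representation.

Lemma eval_continuous (I : Type) (T : I -> topologicalType) (i : I) :
  continuous (fun g : prod_topology T => g i).
Proof.
move=> g U /= gU; have /cvg_sup/(_ i) g_i := @cvg_id _ (nbhs g).
exact: g_i _ (@initial_continuous _ (T i) (fun h : forall j, T j => h i) g U gU).
Qed.

Lemma continuous_prod_topology (Y : topologicalType) (I : Type)
    (T : I -> topologicalType) (f : Y -> prod_topology T) :
  (forall i, continuous (fun y => f y i)) -> continuous f.
Proof. by move=> fi_cont y; apply/cvg_sup => i; exact: continuous_comp_initial. Qed.

Section ConvexHullOfUnion.
Variables (R : realType) (S : Type) (Sigma : set (set S)).
Local Notation charge := (prod_topology (fun _ : event Sigma => (R : topologicalType))).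
Local Notation Delta := (@fa_prob R S Sigma).

Definition mix (z : (charge * charge) * R) : charge :=
  fun A => z.2 * z.1.1 A + (1 - z.2) * z.1.2 A.

Definition conv_setU (A B : set charge) : set charge :=
  mix @` ((A `*` B) `*` [set t | 0 <= t <= 1]).

Lemma mix_continuous : continuous mix.
Proof.
apply: continuous_prod_topology => A z.
apply: cvgD; apply: cvgM.
- exact: cvg_snd.
- apply: (@continuous_comp _ _ _ (fun z : (charge * charge) * R => z.1.1)
    (fun g : charge => g A)); last exact: eval_continuous.
  by apply: (@continuous_comp _ _ _ fst fst); exact: cvg_fst.
- by apply: cvgB; [exact: cvg_cst | exact: cvg_snd].
- apply: (@continuous_comp _ _ _ (fun z : (charge * charge) * R => z.1.2)
    (fun g : charge => g A)); last exact: eval_continuous.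
  by apply: (@continuous_comp _ _ _ fst snd); [exact: cvg_fst | exact: cvg_snd].
Qed.

Lemma pext_mix (p q : charge) t B :
  pext (mix ((p, q), t)) B = t * pext p B + (1 - t) * pext q B.
Proof. by rewrite /pext; case: pselect => // _; rewrite !mulr0 addr0. Qed.

Lemma sint_mix (p q : charge) t (g : S -> R) : finite_set (range g) ->
  sint (mix ((p, q), t)) g = t * sint p g + (1 - t) * sint q g.
Proof.
move=> g_fin; rewrite /sint !mulr_fsumr -fsbig_split //.
by apply: eq_fsbigr => r _; rewrite /= pext_mix; ring.
Qed.

Lemma conv_setU_prob A B : A `<=` Delta -> B `<=` Delta -> conv_setU A B `<=` Delta.
Proof.
move=> A_prob B_prob _ [[[p q] t] [[/= Ap Bq] /andP[t0 t1]] <-].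
have [p1 p_ge0 p_add] := A_prob _ Ap; have [q1 q_ge0 q_add] := B_prob _ Bq.
split => [|E SE|E F SE SF EF]; rewrite !pext_mix.
- by rewrite p1 q1; ring.
- by rewrite addr_ge0 // mulr_ge0 ?subr_ge0 ?p_ge0 ?q_ge0.
- by rewrite p_add // q_add //; ring.
Qed.

Lemma conv_setU_subl A B : B !=set0 -> A `<=` conv_setU A B.
Proof.
move=> [q Bq] p Ap; exists ((p, q), 1); first by split => //=; rewrite lexx ler01.
by apply/funext => E; rewrite /mix /= subrr mul0r addr0 mul1r.
Qed.

Lemma conv_setU_subr A B : A !=set0 -> B `<=` conv_setU A B.
Proof.
move=> [p Ap] q Bq; exists ((p, q), 0); first by split => //=; rewrite lexx ler01.
by apply/funext => E; rewrite /mix /= subr0 mul0r add0r mul1r.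
Qed.

Lemma conv_setU_compact A B : wstar_compact A -> wstar_compact B ->
  wstar_compact (conv_setU A B).
Proof.
move=> A_compact B_compact; apply: continuous_compact.
  by apply: continuous_subspaceT => z; exact: mix_continuous.
apply: compact_setX; first exact: compact_setX.
by rewrite -set_itvcc; exact: segment_compact.
Qed.

Lemma convex_charges_cone (A : set charge) p1 p2 a b : convex_charges A ->
  A p1 -> A p2 -> 0 <= a -> 0 <= b ->
  exists2 p, A p & forall E, (a + b) * p E = a * p1 E + b * p2 E.
Proof.
move=> A_convex Ap1 Ap2 a0 b0; have [ab0|ab_neq0] := eqVneq (a + b) 0.
  exists p1 => // E; have [-> ->] : a = 0 /\ b = 0 by split; lra.
  by rewrite addr0 !mul0r addr0.
have ab_gt0 : 0 < a + b by rewrite lt_def ab_neq0 addr_ge0.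
exists (fun E => a / (a + b) * p1 E + (1 - a / (a + b)) * p2 E); last by move=> E; field.
by apply: A_convex; rewrite ?divr_ge0 ?ler_pdivrMr ?mul1r ?lerDl // ltW.
Qed.

Lemma conv_setU_convex A B : convex_charges A -> convex_charges B ->
  convex_charges (conv_setU A B).
Proof.
move=> A_convex B_convex _ _ s [[[p1 q1] t1] [[/= Ap1 Bq1] /andP[t10 t11]] <-]
  [[[p2 q2] t2] [[/= Ap2 Bq2] /andP[t20 t21]] <-] s0 s1.
have [t1' t2' s'] : [/\ 0 <= 1 - t1, 0 <= 1 - t2 & 0 <= 1 - s] by rewrite !subr_ge0.
have [p Ap pE] := convex_charges_cone A_convex Ap1 Ap2
  (mulr_ge0 s0 t10) (mulr_ge0 s' t20).
have [q Bq qE] := convex_charges_cone B_convex Bq1 Bq2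
  (mulr_ge0 s0 t1') (mulr_ge0 s' t2').
exists ((p, q), s * t1 + (1 - s) * t2).
  by split => //=; apply/andP; split; nra.
apply/funext => E; rewrite /mix /=.
have -> : 1 - (s * t1 + (1 - s) * t2) = s * (1 - t1) + (1 - s) * (1 - t2) by ring.
by rewrite pE qE; ring.
Qed.

End ConvexHullOfUnion.

Section AmbiguityAversion.
Variables (R : realType) (V : lmodType R) (S : Type) (Sigma : set (set S)).
Hypothesis Sigma_algebra : is_algebra Sigma.
Variable X : set V.
(* [convex_set] is MathComp-Analysis' notion, which shadows the one of [Defs]. *)
Hypothesis X_convex : convex_set X.
Implicit Types (pref : (S -> V) -> (S -> V) -> Prop) (u : V -> R)
  (C D : set (event Sigma -> R)).
Local Notation Delta := (@fa_prob R S Sigma).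

Lemma affine_between u x y a b : affine_on X u -> X x -> X y -> a < b ->
  u x < b -> a < u y -> exists2 z, X z & a < u z < b.
Proof.
move=> u_affine Xx Xy ab xb ay.
have [ax|xa] := ltP a (u x); first by exists x; rewrite ?ax.
have [yb|by_] := ltP (u y) b; first by exists y; rewrite ?ay.
have d_gt0 : 0 < u y - u x by rewrite subr_gt0; lra.
pose t := ((a + b) / 2 - u x) / (u y - u x).
have tE : t * (u y - u x) = (a + b) / 2 - u x by rewrite divfK // gt_eqF.
have t0 : 0 <= t by rewrite divr_ge0 ?ltW //; lra.
have t1 : t <= 1 by rewrite ler_pdivrMr // mul1r; lra.
exists (t *: y + (1 - t) *: x).
  by have := X_convex (Itv01 t0 t1) (mem_set Xy) (mem_set Xx); rewrite inE.
rewrite u_affine // (_ : t * u y + _ = t * (u y - u x) + u x); last by ring.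
by rewrite tE; apply/andP; split; lra.
Qed.

Lemma averse_minEU_le pref1 pref2 u C1 D1 C2 D2 :
  HP_rep X pref1 u C1 D1 -> HP_rep X pref2 u C2 D2 ->
  more_ambiguity_averse Sigma X pref1 pref2 ->
  forall f, is_act Sigma X f -> minEU C1 u f <= minEU C2 u f.
Proof.
move=> rep1 rep2 averse f f_act; rewrite leNgt; apply/negP => lt21.
have [u_affine [C1_prob _] _ [q1 [C1q1 _]] _] := rep1.
have [_ [C2_prob _] _ [q2 [C2q2 _]] _] := rep2.
have uf_simple := act_simple Sigma_algebra u f_act.
have EU2_nonempty : [set sint p (u \o f) | p in C2] !=set0.
  by exists (sint q2 (u \o f)), q2.
have [_ [p C2p <-] lt_p1] := inf_lt EU2_nonempty lt21.
have [s1 lt1] := exists_lt_of_sint_lt Sigma_algebra (C2_prob _ C2p) uf_simple lt_p1.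
have [s2 lt2] := exists_gt_of_lt_sint Sigma_algebra (C1_prob _ C1q1) uf_simple
  (lt_le_trans lt21 (minEU_le Sigma_algebra u C1_prob f_act C1q1)).
have [Xf _ _] := f_act.
have [x Xx /andP[lt2x ltx1]] := affine_between u_affine (Xf s1) (Xf s2) lt21 lt1 lt2.
have /(averse _ _ f_act Xx) : pref1 f (cst_act x).
  exact/(HP_rep_pref_cst Sigma_algebra rep1 f_act Xx).
move/(HP_rep_pref_cst Sigma_algebra rep2 f_act Xx)/(lt_trans lt2x).
by rewrite ltxx.
Qed.

Lemma HP_rep_minEU_eq pref u C C' D : HP_rep X pref u C D ->
  C' `<=` Delta -> convex_charges C' -> wstar_compact C' -> C' `&` D !=set0 ->
  (forall f, is_act Sigma X f -> minEU C' u f = minEU C u f) ->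
  HP_rep X pref u C' D.
Proof.
case=> u_affine [_ D_prob] [[_ D_convex] [_ D_compact]] _ pref_rep.
move=> C'_prob C'_convex C'_compact C'D minEU_eq; split => // f g.
rewrite pref_rep; split => -[f_act g_act].
  by rewrite !minEU_eq.
by rewrite -!minEU_eq.
Qed.

Lemma minEU_conv_setU u C1 C2 : C1 `<=` Delta -> C2 `<=` Delta ->
  C1 !=set0 -> C2 !=set0 ->
  (forall f, is_act Sigma X f -> minEU C1 u f <= minEU C2 u f) ->
  forall f, is_act Sigma X f -> minEU (conv_setU C1 C2) u f = minEU C1 u f.
Proof.
move=> C1_prob C2_prob C1_nonempty C2_nonempty le12 f f_act.
have C1_sub : C1 `<=` conv_setU C1 C2 := conv_setU_subl C2_nonempty.
have hull_prob := conv_setU_prob C1_prob C2_prob.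
apply/le_anti/andP; split.
  exact: (minEU_le_subset Sigma_algebra u hull_prob C1_sub C1_nonempty f_act).
apply: minEU_ge => [|_ [[[p q] t] [[/= C1p C2q] /andP[t0 t1]] <-]].
  by case: C1_nonempty => q1 C1q1; exists q1; exact: C1_sub.
rewrite sint_mix; last exact: (act_simple Sigma_algebra u f_act).2.
have := minEU_le Sigma_algebra u C1_prob f_act C1p.
have := le_trans (le12 f f_act) (minEU_le Sigma_algebra u C2_prob f_act C2q).
nra.
Qed.

Lemma sub_of_averse pref1 pref2 u C1 D1 C2 D2 :
  HP_unique_rep X pref1 u C1 D1 -> HP_rep X pref2 u C2 D2 ->
  more_ambiguity_averse Sigma X pref1 pref2 -> C2 `<=` C1.
Proof.
move=> [rep1 rep1_unique] rep2 averse.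
have le12 := averse_minEU_le rep1 rep2 averse.
have [_ [C1_prob _] [[C1_convex _] [C1_compact _]] [q1 [C1q1 D1q1]] _] := rep1.
have [_ [C2_prob _] [[C2_convex _] [C2_compact _]] [q2 [C2q2 _]] _] := rep2.
have rep : HP_rep X pref1 u (conv_setU C1 C2) D1.
  apply: (HP_rep_minEU_eq rep1).
  - exact: conv_setU_prob.
  - exact: conv_setU_convex.
  - exact: conv_setU_compact.
  - by exists q1; split => //; apply: conv_setU_subl => //; exists q2.
  - by apply: minEU_conv_setU => //; [exists q1 | exists q2].
have [<- _ _] := rep1_unique _ _ _ rep.
by apply: conv_setU_subr; exists q1.
Qed.

Lemma averse_of_sub pref1 pref2 u C1 D1 C2 D2 :
  HP_rep X pref1 u C1 D1 -> HP_rep X pref2 u C2 D2 ->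
  C2 `<=` C1 -> more_ambiguity_averse Sigma X pref1 pref2.
Proof.
move=> rep1 rep2 C21 f x f_act Xx.
have [_ [C1_prob _] _ _ _] := rep1; have [_ _ _ [q2 [C2q2 _]] _] := rep2.
move/(HP_rep_pref_cst Sigma_algebra rep1 f_act Xx) => lt1.
apply/(HP_rep_pref_cst Sigma_algebra rep2 f_act Xx).
apply: lt_le_trans lt1 (minEU_le_subset Sigma_algebra u C1_prob C21 _ f_act).
by exists q2.
Qed.

Lemma more_ambiguity_averseE pref1 pref2 u C1 D1 C2 D2 :
  HP_unique_rep X pref1 u C1 D1 -> HP_rep X pref2 u C2 D2 ->
  more_ambiguity_averse Sigma X pref1 pref2 <-> C2 `<=` C1.
Proof.
move=> urep1 rep2; split; first exact: sub_of_averse urep1 rep2.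
exact: averse_of_sub urep1.1 rep2.
Qed.

End AmbiguityAversion.

Unset Implicit Arguments.

Theorem proposition2 (R : realType) (V : lmodType R) (S : Type)
  (Sigma : set (set S)) (X : set V) (u : V -> R)
  (pref1 pref2 : (S -> V) -> (S -> V) -> Prop)
  (C1 D1 C2 D2 : set (event Sigma -> R)) :
  is_algebra Sigma ->
  convex_set X ->
  (exists x y, X x /\ X y /\ x <> y) ->
  affine_on X u ->
  (exists x y, X x /\ X y /\ u x <> u y) ->
  HP_unique_rep X pref1 u C1 D1 ->
  HP_unique_rep X pref2 u C2 D2 ->
  (more_ambiguity_averse Sigma X pref1 pref2 <-> C2 `<=` C1) /\
  (more_ambiguity_loving Sigma X pref1 pref2 <-> D2 `<=` D1).
Proof.
(* Affinity of u is part of [HP_rep]; the nondegeneracy of X and of u only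
   matters for the uniqueness of the representations, which is assumed. *)
move=> Sigma_algebra X_convex _ _ _ urep1 urep2; split.
  exact (more_ambiguity_averseE Sigma_algebra X_convex urep1 urep2.1).
exact (more_ambiguity_averseE Sigma_algebra X_convex
  (HP_unique_rep_converse urep1) (HP_unique_rep_converse urep2).1).
Qed.
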